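(* Let $\pi\in S_n$ be a 321-avoiding permutation and let $i_1<i_2<\dots<i_r$ be its excedance locations (the indices $i$ with $\pi(i)>i$). Then the number of fixed points of $\pi$ is: (1) $n$, if $\pi$ is the identity; (2) $i_1-1+\sum_{j=2}^{r}\max\{i_j-\pi(i_{j-1})-1,0\}+n-\pi(i_r)$, if $\pi$ is not the identity.
   Context: A permutation $\pi$ of $[n]$ is 321-avoiding if there are no $i<j<k$ with $\pi(k)<\pi(j)<\pi(i)$. *)

From mathcomp Require Import all_boot all_fingroup.
Set Implicit Arguments. Unset Strict Implicit. Unset Printing Implicit Defensive.

(* A permutation of [n] = {1,...,n} is modelled by s : 'S_n acting on
   'I_n = {0,...,n-1}; its 1-based value at k (1 <= k <= n) is pi1 s k. *)
Definition pi1 {n} (s : 'S_n) (k : nat) : nat :=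
  match insub k.-1 with Some i => (val (s i)).+1 | None => k end.

Definition avoids321 {n} (s : 'S_n) : bool :=
  [forall i : 'I_n, forall j : 'I_n, forall k : 'I_n,
     ~~ [&& i < j, j < k, s k < s j & s j < s i]].

Definition nfix {n} (s : 'S_n) : nat := #|[set i : 'I_n | s i == i]|.

Definition exc_locs {n} (s : 'S_n) : seq nat :=
  [seq k <- iota 1 n | k < pi1 s k].

(* Truncated nat subtraction in (i_j - pi(i_{j-1}) - 1) realises max(.,0);
   the other subtractions are nonnegative anyway. *)
Definition fix_formula {n} (s : 'S_n) : nat :=
  let e := exc_locs s in
  (head 0 e - 1)
  + \sum_(1 <= j < size e) (nth 0 e j - pi1 s (nth 0 e j.-1) - 1)
  + (n - pi1 s (last 0 e)).

From mathcomp Require Import all_boot all_fingroup.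
From mathcomp Require Import zify.

Set Implicit Arguments. Unset Strict Implicit. Unset Printing Implicit Defensive.

(* In a 321-avoiding permutation, i < j <= pi(j) forces pi(i) <= pi(j): otherwise
   either some m > j has pi(m) < pi(j), completing a 321 pattern, or i and the
   n - j points after j would be sent injectively above pi(j).  Hence the
   excedance values increase along the excedance locations, and no fixed point
   lies in an excedance interval [i, pi(i)]; conversely every non-fixed point k
   lies in one, by pigeonhole on pi(1), ..., pi(k).  The fixed points are thus
   the points of [1, n] outside a union of intervals whose left and right ends
   both increase, and counting them gives the gap before i_1, the gaps between
   pi(i_(j-1)) and i_j, and the gap after pi(i_r). *)

Definition covered (f : nat -> nat) (I : seq nat) (k : nat) : bool :=
  has (fun i => i <= k <= f i) I.
Arguments covered : simpl never.

Definition gaps (f : nat -> nat) (e : seq nat) : nat :=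
  \sum_(1 <= j < size e) (nth 0 e j - f (nth 0 e j.-1) - 1).

Lemma gaps_cons2 f x y t : gaps f [:: x, y & t] = (y - f x - 1) + gaps f (y :: t).
Proof. by rewrite /gaps big_nat_recl //=; congr (_ + _); apply: eq_big_nat => -[|j]. Qed.

Lemma count_outside_interval lo d a b : a <= b ->
  count (fun k => ~~ (a <= k <= b)) (iota lo d) =
  (minn a (lo + d) - lo) + (lo + d - maxn b.+1 lo).
Proof.
move=> le_ab; elim: d lo => [|d IHd] lo /=; first lia.
rewrite IHd; case: (leqP a lo); case: (leqP lo b) => /=; lia.
Qed.

Lemma uniq_inj_leq_range (f : nat -> nat) (L : seq nat) lo hi :
  {in L &, injective f} -> uniq L -> (forall x, x \in L -> lo <= f x < hi) ->
  size L <= hi - lo.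
Proof.
move=> inj_f uniqL rangeL; rewrite -(size_map f) -(size_iota lo (hi - lo)).
apply: uniq_leq_size; first by rewrite map_inj_in_uniq.
by move=> _ /mapP[x /rangeL fx ->]; rewrite mem_iota subnKC; lia.
Qed.

Lemma count_uncovered (f : nat -> nat) N lo x t :
  sorted ltn (x :: t) -> (forall i, i \in x :: t -> i <= f i <= N) ->
  {in x :: t &, {homo f : i j / i < j >-> i <= j}} -> lo <= x ->
  count (predC (covered f (x :: t))) (iota lo (N.+1 - lo)) =
  (x - lo) + gaps f (x :: t) + (N - f (last x t)).
Proof.
elim: t x lo => [|y t IHt] x lo sorted_xt range_f homo_f lo_x.
  have fx := range_f x (mem_head _ _).
  rewrite /gaps big_geq //= (@eq_count _ _ (fun k => ~~ (x <= k <= f x))) => [|k].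
    by rewrite count_outside_interval; lia.
  by rewrite /= /covered /= orbF.
have /andP[lt_xy sorted_yt] := sorted_xt.
have fx := range_f x (mem_head _ _).
have le_fxy : f x <= f y by apply: homo_f; rewrite ?inE ?eqxx ?orbT.
have ge_y i : i \in y :: t -> y <= i.
  rewrite inE => /predU1P[-> //|it].
  by move/allP: (order_path_min ltn_trans sorted_yt) => /(_ i it)/ltnW.
have covered_cons k : covered f (x :: y :: t) k = (x <= k <= f x) || covered f (y :: t) k.
  by [].
have -> : N.+1 - lo = (y - lo) + (N.+1 - y) by have := range_f y; rewrite !inE eqxx orbT; lia.
rewrite iotaD count_cat subnKC; last lia.
rewrite (@eq_in_count _ _ (fun k => ~~ (x <= k <= f x))); last first.
  move=> k; rewrite mem_iota => /andP[_ lt_ky]; rewrite /= covered_cons negb_or andb_idr //.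
  by move=> _; apply/hasPn => i /ge_y le_yi; lia.
rewrite (@eq_in_count _ (predC (covered f (x :: y :: t))) (predC (covered f (y :: t))));
  last first.
  move=> k; rewrite mem_iota => /andP[le_yk _]; rewrite /= covered_cons negb_or andb_idl //.
  apply: contra => /andP[le_xk le_kfx]; apply/orP; left; lia.
rewrite count_outside_interval; last lia.
rewrite IHt //; first last.
- by move=> i j iyt jyt; apply: homo_f; rewrite inE ?iyt ?jyt orbT.
- by move=> i iyt; apply: range_f; rewrite inE iyt orbT.
rewrite gaps_cons2 /=; lia.
Qed.

Section Pi1.
Variables (n : nat) (s : 'S_n).
Local Notation p := (pi1 s).

Lemma pi1E (i : 'I_n) : p i.+1 = (s i).+1.
Proof. by rewrite /pi1 /= valK. Qed.

Lemma pi1_gt k : n < k -> p k = k.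
Proof. move=> lt_nk; rewrite /pi1 insubN // -leqNgt; lia. Qed.

Lemma pi1_range k : 0 < k <= n -> 0 < p k <= n.
Proof.
by case: k => // k /= lt_kn; rewrite /pi1 /= insubT /= ltn_ord.
Qed.

Lemma pi1_leq_max k : p k <= maxn n k.
Proof. by rewrite /pi1; case: insubP => [i _ _|_]; rewrite leq_max ?ltn_ord ?leqnn ?orbT. Qed.

(* [pi1 s 0 = pi1 s 1], hence the positivity hypotheses here and below. *)
Lemma pi1_inj x y : 0 < x -> 0 < y -> p x = p y -> x = y.
Proof.
case: x => // x _; case: y => // y _.
have [lt_xn | le_nx] := ltnP x n; have [lt_yn | le_ny] := ltnP y n.
- rewrite (pi1E (Ordinal lt_xn)) (pi1E (Ordinal lt_yn)).
  by move=> [/val_inj/perm_inj/(congr1 val) /= ->].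
- by rewrite [p y.+1]pi1_gt //; have := pi1_range (k := x.+1); lia.
- by rewrite [p x.+1]pi1_gt //; have := pi1_range (k := y.+1); lia.
by rewrite !pi1_gt.
Qed.

Lemma exc_leq_n i : 0 < i -> i < p i -> i <= n.
Proof. by move=> _; apply: contraTT; rewrite -!ltnNge => /pi1_gt ->. Qed.

Lemma mem_exc_locs i : (i \in exc_locs s) = (0 < i) && (i < p i).
Proof.
rewrite mem_filter mem_iota; apply/idP/idP => [/and3P[-> -> //] | /andP[i_gt0 lt_ipi]].
by rewrite lt_ipi i_gt0 add1n ltnS (exc_leq_n i_gt0 lt_ipi).
Qed.

Lemma nfix_count : nfix s = count (fun k => p k == k) (iota 1 n).
Proof.
rewrite /nfix cardsE cardE /enum_mem size_filter -enumT.
rewrite (iotaDl 1 0) -val_enum_ord -map_comp count_map.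
by apply: eq_count => i /=; rewrite add1n pi1E eqSS.
Qed.

Lemma nonfixed_covered k : 0 < k -> p k != k -> covered p (exc_locs s) k.
Proof.
move=> k_gt0 nfix_k.
have cover i : 0 < i -> i < p i -> i <= k <= p i -> covered p (exc_locs s) k.
  by move=> i_gt0 lt_ipi le_ikpi; apply/hasP; exists i; rewrite ?mem_exc_locs ?i_gt0.
have [lt_kpk | le_pkk] := ltnP k (p k).
  by apply: (cover k) => //; rewrite leqnn ltnW.
have [/hasP[i] | /hasPn low] := boolP (has (fun i => k <= p i) (iota 1 k)).
  rewrite mem_iota => /andP[i_gt0 le_ik] le_kpi.
  have ne_ik : i != k by apply: contraTneq le_kpi => ->; rewrite -ltnNge ltn_neqAle nfix_k.
  by apply: (cover i); move/eqP: ne_ik; lia.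
have le_kn : k <= n by apply: contraNT nfix_k; rewrite -ltnNge => /pi1_gt ->.
suff : size (iota 1 k) <= k - 1 by rewrite size_iota; lia.
apply: uniq_inj_leq_range (iota_uniq 1 k) _.
  by move=> x y; rewrite !mem_iota => /andP[x_gt0 _] /andP[y_gt0 _]; apply: pi1_inj.
move=> x x_in; have := low x x_in; move: x_in; rewrite mem_iota => x_range.
by have := pi1_range (k := x); lia.
Qed.

Lemma exc_locs_nil : exc_locs s = [::] -> s = 1%g.
Proof.
move=> no_exc; apply/permP => i; apply/val_inj/eqP; rewrite perm1 -eqSS -pi1E.
by apply: contraT => /(nonfixed_covered (ltn0Sn _)); rewrite no_exc.
Qed.

Lemma nfix1 : nfix (1%g : 'S_n) = n.
Proof.
rewrite /nfix (_ : [set i | _] = setT) ?cardsT ?card_ord //.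
by apply/setP => i; rewrite !inE perm1 eqxx.
Qed.

Hypothesis s_avoids : avoids321 s.

Lemma avoids321P a b c : 0 < a -> a < b < c -> ~~ (p c < p b < p a).
Proof.
move=> a_gt0 /andP[lt_ab lt_bc].
have [le_cn | lt_nc] := leqP c n; last first.
  by rewrite (pi1_gt lt_nc); have := pi1_leq_max b; lia.
case: a a_gt0 lt_ab => // a _ lt_ab; case: b lt_ab lt_bc => // b lt_ab lt_bc.
case: c lt_bc le_cn => // c lt_bc lt_cn.
rewrite !ltnS in lt_ab lt_bc.
have lt_bn : b < n by lia.
have lt_an : a < n by lia.
rewrite (pi1E (Ordinal lt_an)) (pi1E (Ordinal lt_bn)) (pi1E (Ordinal lt_cn)) !ltnS.
move: s_avoids => /forallP/(_ (Ordinal lt_an))/forallP/(_ (Ordinal lt_bn)).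
by move=> /forallP/(_ (Ordinal lt_cn)) /=; rewrite lt_ab lt_bc.
Qed.

Lemma leq_pi1_weak_exc i j : 0 < i -> i < j -> j <= p j -> p i <= p j.
Proof.
move=> i_gt0 lt_ij le_jpj; rewrite leqNgt; apply/negP => lt_pj_pi.
have [/hasP[m] | /hasPn tail_high] := boolP (has (fun m => p m < p j) (iota j.+1 (n - j))).
  rewrite mem_iota => /andP[lt_jm _] lt_pm_pj.
  by have := @avoids321P i j m i_gt0; rewrite lt_ij lt_jm lt_pm_pj lt_pj_pi => /(_ isT).
have le_in : i <= n by apply: (exc_leq_n i_gt0); lia.
suff : size (i :: iota j.+1 (n - j)) <= n.+1 - (p j).+1 by rewrite /= size_iota; lia.
apply: uniq_inj_leq_range.
- by move=> x y; rewrite !inE !mem_iota => x_in y_in; apply: pi1_inj; lia.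
- by rewrite /= iota_uniq mem_iota andbT; lia.
move=> x; rewrite inE => /predU1P[-> | x_in].
  by have := pi1_range (k := i); lia.
have := tail_high x x_in; move: x_in; rewrite mem_iota -leqNgt => x_range le_pj_px.
have ne_px_pj : p x != p j by apply/eqP => /pi1_inj; lia.
by have := pi1_range (k := x); move/eqP: ne_px_pj; lia.
Qed.

Lemma fixedE k : 0 < k -> (p k == k) = ~~ covered p (exc_locs s) k.
Proof.
move=> k_gt0; apply/idP/idP => [/eqP fix_k | ]; last exact/contraR/nonfixed_covered.
apply/hasPn => i; rewrite mem_exc_locs => /andP[i_gt0 lt_ipi].
apply/negP => /andP[le_ik le_kpi].
have lt_ik : i < k.
  by rewrite ltn_neqAle le_ik andbT; apply: contraTneq lt_ipi => ->; rewrite fix_k ltnn.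
have := leq_pi1_weak_exc i_gt0 lt_ik; rewrite fix_k leqnn => /(_ isT) le_pik.
have := pi1_inj i_gt0 k_gt0; rewrite fix_k; lia.
Qed.
End Pi1.

Theorem mainTheorem12 (n : nat) (s : 'S_n) :
  avoids321 s ->
  (s = 1%g -> nfix s = n) /\
  (s <> 1%g -> nfix s = fix_formula s).
Proof.
move=> s_avoids; split=> [-> | s_ne1]; first exact: nfix1.
case e_exc: (exc_locs s) => [|x t]; first by case: s_ne1; apply: exc_locs_nil.
have mem_xt i : (i \in x :: t) = (0 < i) && (i < pi1 s i) by rewrite -e_exc mem_exc_locs.
rewrite nfix_count (@eq_in_count _ _ (predC (covered (pi1 s) (x :: t)))); last first.
  by move=> k; rewrite mem_iota -e_exc => /andP[k_gt0 _]; apply: fixedE.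
have -> : iota 1 n = iota 1 (n.+1 - 1) by rewrite subSS subn0.
rewrite count_uncovered /fix_formula ?e_exc //.
- by rewrite -e_exc; apply/sorted_filter/iota_ltn_sorted/ltn_trans.
- move=> i; rewrite mem_xt => /andP[i_gt0 lt_ipi].
  by have := @pi1_range n s i; have := exc_leq_n i_gt0 lt_ipi; lia.
- move=> i j; rewrite !mem_xt => /andP[i_gt0 _] /andP[_ lt_jpj] lt_ij.
  exact: leq_pi1_weak_exc (ltnW lt_jpj).
by have := mem_xt x; rewrite mem_head => /esym/andP[].
Qed.
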